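(* Let $N$ be the number of experts, $T$ the time horizon, and run EXP4.AT with learning rate $\eta=\sqrt{\frac{\ln N}{2T}}$. Then for any sequence of true labels $y_1,\dots,y_T\in\{0,1\}$ and expert advice $(\mathcal{E}^i_t)$, the predictions $\hat y_1,\dots,\hat y_T$ output by EXP4.AT satisfy $$\mathbb{E}\Bigl[\sum_{t=1}^T\mathbb{1}\{\hat y_t\ne y_t\}\Bigr] \le \inf_{j\in[N]}\sum_{t=1}^T\mathbb{1}\{\mathcal{E}^j_t\ne y_t\} + 3\sqrt{T\ln N}.$$
   Context: Binary prediction with expert advice under apple tasting feedback, where the labels and advice are fixed in advance (not depending on the algorithm's randomness). EXP4.AT with learning rate $\eta\in(0,\tfrac12)$: let $q_1$ be uniform on $[N]$. In each round $t=1,\dots,T$: receive advice $\mathcal{E}^1_t,\dots,\mathcal{E}^N_t\in\{0,1\}$; set $p_t^1=(1-\eta)\sum_{i=1}^N q_t^i\mathcal{E}^i_t+\eta$ and $p_t^0=1-p_t^1$; predict $\hat y_t=1$ with probability $p_t^1$ and $\hat y_t=0$ otherwise; the true label $y_t$ is observed only if $\hat y_t=1$; define $\hat\ell_t(y)=\mathbb{1}\{y\ne y_t\}\mathbb{1}\{\hat y_t=1\}/p_t^1$ for $y\in\{0,1\}$; update $q_{t+1}^i=\frac{q_t^i\exp(-\eta\hat\ell_t(\mathcal{E}^i_t))}{\sum_{j=1}^N q_t^j\exp(-\eta\hat\ell_t(\mathcal{E}^j_t))}$. The expectation is over the algorithm's randomness. *)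

From HB Require Import structures.
From mathcomp Require Import all_boot all_order all_algebra.
From mathcomp Require Import all_classical all_reals all_analysis.
Set Implicit Arguments. Unset Strict Implicit. Unset Printing Implicit Defensive.
Import Order.TTheory GRing.Theory Num.Theory.
Local Open Scope ring_scope.

(* Rounds are indexed 0 .. T-1 (round t of the paper is index t-1).          *)

Section EXP4AT.
Variables (R : realType) (N : nat) (eta : R) (E : nat -> 'I_N -> bool).

Definition exp4_p1_of (q : 'I_N -> R) (t : nat) : R :=
  (1 - eta) * (\sum_(i < N) q i * (E t i)%:R) + eta.

Definition exp4_lhat_of (y yh : nat -> bool) (q : 'I_N -> R) (t : nat) (b : bool) : R :=
  ((b != y t) && yh t)%:R / exp4_p1_of q t.

Fixpoint exp4_q (y yh : nat -> bool) (t : nat) : 'I_N -> R :=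
  match t with
  | 0 => fun _ => N%:R^-1
  | t'.+1 =>
      let q := exp4_q y yh t' in
      let w := fun i => q i * expR (- (eta * exp4_lhat_of y yh q t' (E t' i))) in
      fun i => w i / \sum_(j < N) w j
  end.

Definition exp4_p1 (y yh : nat -> bool) (t : nat) : R :=
  exp4_p1_of (exp4_q y yh t) t.

(* extend a prediction vector over 'I_T to all of nat (irrelevant beyond T) *)
Definition ext_pred (T : nat) (yh : {ffun 'I_T -> bool}) : nat -> bool :=
  fun n => match @insub nat (fun k => k < T)%N 'I_T n with
           | Some i => yh i | None => false end.

Definition exp4_prob (T : nat) (y : nat -> bool) (yh : {ffun 'I_T -> bool}) : R :=
  \prod_(t < T) (if yh t then exp4_p1 y (ext_pred yh) t
                 else 1 - exp4_p1 y (ext_pred yh) t).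

Definition exp4_expected_mistakes (T : nat) (y : nat -> bool) : R :=
  \sum_(yh : {ffun 'I_T -> bool})
     exp4_prob y yh * (\sum_(t < T) (yh t != y t)%:R).

End EXP4AT.

(* Let Z_t = Σ_i q_t^i exp(-η ℓ̂_t(E^i_t)) be the normaliser of the update. Since
   q_{t+1}^j = q_t^j exp(-η ℓ̂_t(E^j_t)) / Z_t, the sum over t of ln Z_t + η ℓ̂_t(E^j_t)
   telescopes to ln q_1^j - ln q_{T+1}^j >= -ln N. Conditionally on the past, ℓ̂_t(E^j_t)
   is an unbiased estimate of 1{E^j_t <> y_t}, and ln (1 + u) <= u together with
   quadratic bounds on exp give E_t[ln Z_t] + η Pr_t[ŷ_t <> y_t] <= 2η², the exploration
   term keeping η / p_t^1 <= 1. So the potential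
     ln Z_t + η ℓ̂_t(E^j_t) + η 1{ŷ_t <> y_t} - η 1{E^j_t <> y_t} - 2η²
   has nonpositive conditional expectation, and taking expectations gives
   η E[mistakes] <= ln N + η L_j + 2η²T, which the tuned η turns into the claim. *)

From mathcomp Require Import all_boot all_order all_algebra.
From mathcomp Require Import all_classical all_reals all_analysis.
From mathcomp Require Import ring lra.
Import Order.TTheory GRing.Theory Num.Theory.
Local Open Scope ring_scope.
Set Implicit Arguments. Unset Strict Implicit. Unset Printing Implicit Defensive.

Definition upd (h : nat -> bool) (t : nat) (b : bool) : nat -> bool :=
  fun n => if n == t then b else h n.

Lemma upd_lt h t b k : (k < t)%N -> upd h t b k = h k.
Proof. by move=> lt_kt; rewrite /upd ltn_eqF. Qed.

Lemma upd_eq h t b : upd h t b t = b.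
Proof. by rewrite /upd eqxx. Qed.

Lemma ext_predE T (yh : {ffun 'I_T -> bool}) (i : 'I_T) : ext_pred yh i = yh i.
Proof. by rewrite /ext_pred insubT //= => lt_iT; congr (yh _); apply: val_inj. Qed.

Lemma ext_pred_out T (yh : {ffun 'I_T -> bool}) n : (T <= n)%N -> ext_pred yh n = false.
Proof. by move=> le_Tn; rewrite /ext_pred insubF // ltnNge le_Tn. Qed.

Definition rcons_pred T (f : {ffun 'I_T -> bool}) (b : bool) : {ffun 'I_T.+1 -> bool} :=
  [ffun i : 'I_T.+1 => upd (ext_pred f) T b i].

Lemma ext_pred_rcons T (f : {ffun 'I_T -> bool}) b :
  ext_pred (rcons_pred f b) = upd (ext_pred f) T b.
Proof.
apply: funext => n; have [lt_nT1|le_T1n] := ltnP n T.+1.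
  by rewrite (ext_predE _ (Ordinal lt_nT1)) ffunE.
by rewrite ext_pred_out // /upd gtn_eqF // ext_pred_out // ltnW.
Qed.

Lemma rcons_pred_bij T :
  bijective (fun fb : {ffun 'I_T -> bool} * bool => rcons_pred fb.1 fb.2).
Proof.
exists (fun g : {ffun 'I_T.+1 -> bool} =>
  ([ffun i : 'I_T => g (widen_ord (leqnSn T) i)], g ord_max)).
  case=> f b /=; congr pair; last by rewrite ffunE upd_eq.
  by apply/ffunP => i; rewrite !ffunE /upd /= ltn_eqF // ext_predE.
move=> g; apply/ffunP => i; rewrite ffunE /upd /=.
case: eqP => [iT|/eqP neq_iT].
  by congr (g _); apply: val_inj.
have lt_iT : (i < T)%N by rewrite ltn_neqAle neq_iT -ltnS ltn_ord.
by rewrite (ext_predE _ (Ordinal lt_iT)) ffunE; congr (g _); apply: val_inj.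
Qed.

Section AdaptiveBernoulli.
Variables (R : realType) (P : nat -> (nat -> bool) -> R).
Hypothesis P_causal :
  forall t h h', (forall k, (k < t)%N -> h k = h' k) -> P t h = P t h'.
Hypothesis P01 : forall t h, 0 <= P t h <= 1.

Definition path_prob T (yh : {ffun 'I_T -> bool}) : R :=
  \prod_(t < T) (if yh t then P t (ext_pred yh) else 1 - P t (ext_pred yh)).

Definition path_expect T (F : (nat -> bool) -> R) : R :=
  \sum_(yh : {ffun 'I_T -> bool}) path_prob yh * F (ext_pred yh).

(* For [F] reading [h] only up to round [t], [cond_step t F h] is the conditional
   expectation of [F] given the rounds before [t] of [h]. *)
Definition cond_step t (F : (nat -> bool) -> R) (h : nat -> bool) : R :=
  P t h * F (upd h t true) + (1 - P t h) * F (upd h t false).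

Lemma path_prob_rcons T (f : {ffun 'I_T -> bool}) b :
  path_prob (rcons_pred f b) =
  path_prob f * (if b then P T (ext_pred f) else 1 - P T (ext_pred f)).
Proof.
have P_upd t : (t <= T)%N -> P t (upd (ext_pred f) T b) = P t (ext_pred f).
  by move=> le_tT; apply: P_causal => k lt_kt; apply: upd_lt (leq_trans lt_kt le_tT).
rewrite /path_prob big_ord_recr /= ext_pred_rcons ffunE upd_eq P_upd //.
congr (_ * _); apply: eq_bigr => i _.
by rewrite ffunE /= upd_lt // ext_predE P_upd // ltnW.
Qed.

Lemma path_expectS T F : path_expect T.+1 F = path_expect T (cond_step T F).
Proof.
rewrite /path_expect (reindex _ (onW_bij _ (rcons_pred_bij T))) /=.
rewrite -(pair_bigA _ (fun f b => path_prob (rcons_pred f b) * F (ext_pred (rcons_pred f b)))).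
apply: eq_bigr => f _; rewrite big_bool /= !path_prob_rcons !ext_pred_rcons.
by rewrite /cond_step; ring.
Qed.

Lemma path_prob_ge0 T (yh : {ffun 'I_T -> bool}) : 0 <= path_prob yh.
Proof.
apply: prodr_ge0 => t _; have /andP[P_ge0 P_le1] := P01 t (ext_pred yh).
by case: (yh t); rewrite ?subr_ge0.
Qed.

Lemma ler_path_expect T F1 F2 :
  (forall h, F1 h <= F2 h) -> path_expect T F1 <= path_expect T F2.
Proof.
by move=> le_F; apply: ler_sum => yh _; apply: ler_wpM2l; [exact: path_prob_ge0|exact: le_F].
Qed.

Lemma path_expect1 T : path_expect T (fun=> 1) = 1.
Proof.
elim: T => [|T IH].
  rewrite /path_expect (eq_bigr (fun=> 1)) => [|yh _]; last first.
    by rewrite /path_prob big_ord0 mulr1.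
  by rewrite sumr_const card_ffun card_bool card_ord expn0.
rewrite path_expectS -[RHS]IH; congr path_expect.
by apply: funext => h; rewrite /cond_step; ring.
Qed.

Lemma path_expect_affine T F c d :
  path_expect T (fun h => c * F h + d) = c * path_expect T F + d.
Proof.
rewrite -[d in RHS]mulr1 -(path_expect1 T) /path_expect !mulr_sumr -big_split /=.
by apply: eq_bigr => yh _; ring.
Qed.

Lemma path_expect_sum_le0 (G : nat -> (nat -> bool) -> R) T :
  (forall t h h', (forall k, (k <= t)%N -> h k = h' k) -> G t h = G t h') ->
  (forall t h, cond_step t (G t) h <= 0) ->
  path_expect T (fun h => \sum_(t < T) G t h) <= 0.
Proof.
move=> G_causal G_cond; elim: T => [|T IH].
  by rewrite /path_expect big1 // => yh _; rewrite big_ord0 mulr0.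
rewrite path_expectS; apply: le_trans IH; apply: ler_path_expect => h.
have sum_upd b : \sum_(t < T.+1) G t (upd h T b) = \sum_(t < T) G t h + G T (upd h T b).
  rewrite big_ord_recr /=; congr (_ + _); apply: eq_bigr => i _.
  by apply: G_causal => k le_ki; apply: upd_lt (leq_ltn_trans le_ki _).
have := G_cond T h; rewrite /cond_step !sum_upd; lra.
Qed.

End AdaptiveBernoulli.

Section ExpBounds.
Variable R : realType.
Implicit Types b x : R.

Lemma expRN_le x : 0 <= x -> expR (- x) <= 1 - x + x ^+ 2.
Proof.
move=> x_ge0; have eNx_gt0 := expR_gt0 (- x).
have : expR (- x) * (1 + x) <= 1.
  by have := ler_wpM2l (ltW eNx_gt0) (expR_ge1Dx x); rewrite [_ * expR x]mulrC expRxMexpNx_1.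
have : 0 <= x ^+ 3 by apply: exprn_ge0.
nra.
Qed.

(* Squaring [expR (x / 2) * (1 - x / 2) <= 1]. *)
Lemma expR_le x : 0 <= x <= 1 -> expR x <= 1 + x + 2 * x ^+ 2.
Proof.
move=> /andP[x_ge0 x_le1]; set u := expR (x / 2) * (1 - x / 2).
have u_ge0 : 0 <= u by rewrite mulr_ge0 ?expR_ge0 //; lra.
have u_le1 : u <= 1.
  rewrite -[leRHS](expRxMexpNx_1 (x / 2)); apply: ler_wpM2l; first exact: expR_ge0.
  by have := expR_ge1Dx (- (x / 2)); lra.
have : 1 <= (1 + x + 2 * x ^+ 2) * (1 - x / 2) ^+ 2.
  have : 0 <= x ^+ 2 * ((1 - x) * (5 - 2 * x)) by rewrite mulr_ge0 ?sqr_ge0 ?mulr_ge0; lra.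
  nra.
have : expR x * (1 - x / 2) ^+ 2 = u ^+ 2 by rewrite exprMn -expRM_natr; congr (expR _ * _); lra.
have : 0 < (1 - x / 2) ^+ 2 by rewrite exprn_gt0 //; lra.
have : u ^+ 2 <= 1 by rewrite expr_le1.
nra.
Qed.

Lemma ln_mix_expN_le b x : 0 <= b <= 1 -> 0 <= x ->
  ln (1 - b + b * expR (- x)) <= b * (x ^+ 2 - x).
Proof.
move=> /andP[b_ge0 b_le1] x_ge0.
have -> : 1 - b + b * expR (- x) = 1 + b * (expR (- x) - 1) by ring.
apply: le_trans (le_ln1Dx _) _; first by have := expR_gt0 (- x); nra.
by apply: ler_wpM2l => //; have := expRN_le x_ge0; lra.
Qed.

Lemma ln_mix_expN_le_compl b x : 0 <= b <= 1 -> 0 <= x <= 1 ->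
  ln (1 - b + b * expR (- x)) <= (1 - b) * (x + 2 * x ^+ 2) - x.
Proof.
move=> /andP[b_ge0 b_le1] x01; have ex_le := expR_le x01.
have ex_ge1 : 1 <= expR x by case/andP: x01 => x_ge0 _; have := expR_ge1Dx x; lra.
have -> : 1 - b + b * expR (- x) = (1 + (1 - b) * (expR x - 1)) * expR (- x).
  transitivity (expR (- x) + (1 - b) * (expR x * expR (- x) - expR (- x))); last by ring.
  by rewrite expRxMexpNx_1; ring.
have c_ge0 : 0 <= (1 - b) * (expR x - 1) by apply: mulr_ge0; lra.
rewrite lnM ?posrE ?expR_gt0 ?expRK //; last by lra.
have := @le_ln1Dx _ ((1 - b) * (expR x - 1)) ltac:(lra).
have : (1 - b) * (expR x - 1) <= (1 - b) * (x + 2 * x ^+ 2) by apply: ler_wpM2l; lra.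
lra.
Qed.

End ExpBounds.

(* One round with label [y]: [a] is the weight of the experts advising 1, so [b] is the
   weight of the erring ones; the exploration [eta] in [p] keeps [eta / p <= 1]. *)
Lemma round_bound (R : realType) (y : bool) (a b eta p : R) :
  0 < eta <= 1 / 2 -> 0 <= a <= 1 ->
  p = (1 - eta) * a + eta -> b = (if y then 1 - a else a) ->
  p * ln (1 - b + b * expR (- (eta / p))) + eta * (if y then 1 - p else p)
    <= 2 * eta ^+ 2.
Proof.
move=> /andP[eta_gt0 eta_le] a01 p_def b_def; have /andP[a_ge0 a_le1] := a01.
have eta_le_p : eta <= p by rewrite p_def lerDr mulr_ge0 //; lra.
have a_le_p : a <= p.
  have : p - a = eta * (1 - a) by rewrite p_def; ring.
  have : 0 <= eta * (1 - a) by apply: mulr_ge0; lra.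
  lra.
have p_gt0 : 0 < p by lra.
set x := eta / p.
have px : p * x = eta by rewrite /x mulrC divfK ?gt_eqF.
have x01 : 0 <= x <= 1.
  by rewrite divr_ge0 ?(ltW eta_gt0) ?(ltW p_gt0) //= ler_pdivrMr // mul1r.
have ax_le : a * x * eta <= eta * eta.
  apply: ler_wpM2r; first exact: ltW.
  by rewrite -px; apply: ler_wpM2r; [case/andP: x01|].
have eta_p : eta * p = eta * a - eta * eta * a + eta ^+ 2 by rewrite p_def; ring.
have etaa01 : 0 <= eta * eta * a <= eta * eta.
  have eta2_ge0 : 0 <= eta * eta by rewrite mulr_ge0 // ltW.
  by rewrite mulr_ge0 //= ler_piMr.
case: y in b_def *; rewrite b_def.
- have b01 : 0 <= 1 - a <= 1 by apply/andP; split; lra.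
  have := ler_wpM2l (ltW p_gt0) (ln_mix_expN_le_compl b01 x01).
  have -> : p * ((1 - (1 - a)) * (x + 2 * x ^+ 2) - x) = a * eta + 2 * (a * x * eta) - eta.
    by rewrite -px; ring.
  lra.
- case/andP: x01 => x_ge0 _.
  have := ler_wpM2l (ltW p_gt0) (ln_mix_expN_le a01 x_ge0).
  have -> : p * (a * (x ^+ 2 - x)) = a * x * eta - a * eta by rewrite -px; ring.
  lra.
Qed.

Lemma sumr_gt0 (R : numDomainType) (I : finType) (i0 : I) (F : I -> R) :
  (forall i, 0 < F i) -> 0 < \sum_i F i.
Proof.
move=> F_gt0; apply: (lt_le_trans (F_gt0 i0)); rewrite (bigD1 i0) //= lerDl.
by apply: sumr_ge0 => i _; apply: ltW.
Qed.

Section Mixtures.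
Variables (R : realType) (I : finType) (q : I -> R).
Hypothesis q_ge0 : forall i, 0 <= q i.
Hypothesis q_sum1 : \sum_i q i = 1.

Lemma mass_bounds (c : I -> bool) : 0 <= \sum_i q i * (c i)%:R <= 1.
Proof.
apply/andP; split; first by apply: sumr_ge0 => i _; rewrite mulr_ge0.
by rewrite -[leRHS]q_sum1; apply: ler_sum => i _; case: (c i); rewrite /= ?mulr1 ?mulr0.
Qed.

Lemma mass_neq (c : I -> bool) (b : bool) :
  \sum_i q i * (c i != b)%:R =
  if b then 1 - \sum_i q i * (c i)%:R else \sum_i q i * (c i)%:R.
Proof.
case: b; last by apply: eq_bigr => i _; case: (c i).
rewrite -[X in X - _]q_sum1 -sumrB; apply: eq_bigr => i _.
by case: (c i); rewrite /= ?mulr1 ?mulr0 ?subr0 ?subrr.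
Qed.

Lemma mix_expN (c : I -> bool) x :
  \sum_i q i * expR (- (x * (c i)%:R)) =
  1 - \sum_i q i * (c i)%:R + (\sum_i q i * (c i)%:R) * expR (- x).
Proof.
rewrite -[X in X - _]q_sum1 mulr_suml -sumrB -big_split /=; apply: eq_bigr => i _.
by case: (c i); rewrite ?mulr1 ?mulr0 ?oppr0 ?expR0; ring.
Qed.

End Mixtures.

Section Exp4AT.
Variables (R : realType) (N : nat) (eta : R) (E : nat -> 'I_N -> bool) (y : nat -> bool).
Hypothesis N_gt0 : (0 < N)%N.

Local Notation q := (exp4_q eta E y).
Local Notation p1 := (exp4_p1 eta E y).
Local Notation P := (fun t h => p1 h t).

Definition exp4_lhat h t b := exp4_lhat_of eta E y h (q h t) t b.

Definition exp4_Z h t := \sum_i q h t i * expR (- (eta * exp4_lhat h t (E t i))).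

Lemma exp4_q_causal t h h' : (forall k, (k < t)%N -> h k = h' k) -> q h t = q h' t.
Proof.
elim: t => [//|t IH] eq_hh' /=.
by rewrite IH => [|k lt_kt]; [rewrite /exp4_lhat_of eq_hh'|apply/eq_hh'/ltnW].
Qed.

Lemma exp4_p1_causal t h h' : (forall k, (k < t)%N -> h k = h' k) -> p1 h t = p1 h' t.
Proof. by move=> eq_hh'; rewrite /exp4_p1 (exp4_q_causal eq_hh'). Qed.

Lemma exp4_q_dist t h : (forall i, 0 < q h t i) /\ \sum_i q h t i = 1.
Proof.
have i0 := Ordinal N_gt0.
elim: t => [|t [q_gt0 q_sum1]] /=.
  split=> [i|]; first by rewrite invr_gt0 ltr0n.
  by rewrite sumr_const card_ord -[_ *+ N]mulr_natr mulVf // pnatr_eq0 -lt0n.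
have w_gt0 i : 0 < q h t i * expR (- (eta * exp4_lhat h t (E t i))).
  by rewrite mulr_gt0 ?expR_gt0.
have Z_gt0 : 0 < exp4_Z h t := sumr_gt0 i0 w_gt0.
split=> [i|]; first exact: divr_gt0 (w_gt0 i) Z_gt0.
by rewrite -mulr_suml (divff (lt0r_neq0 Z_gt0)).
Qed.

Lemma exp4_p1_bounds t h : 0 <= eta <= 1 -> 0 <= p1 h t <= 1.
Proof.
move=> /andP[eta_ge0 eta_le1]; have [q_gt0 q_sum1] := exp4_q_dist t h.
have /andP[a_ge0 a_le1] := mass_bounds (fun i => ltW (q_gt0 i)) q_sum1 (E t).
have : 0 <= (1 - eta) * \sum_i q h t i * (E t i)%:R <= 1 - eta.
  by rewrite mulr_ge0 ?subr_ge0 //= ler_piMr ?subr_ge0.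
by rewrite /exp4_p1 /exp4_p1_of; lra.
Qed.

Lemma exp4_Z_gt0 t h : 0 < exp4_Z h t.
Proof.
have [q_gt0 _] := exp4_q_dist t h.
by apply: (sumr_gt0 (Ordinal N_gt0)) => i; rewrite mulr_gt0 ?expR_gt0.
Qed.

Lemma exp4_log_telescope j T h :
  \sum_(t < T) (ln (exp4_Z h t) + eta * exp4_lhat h t (E t j)) =
  ln (q h 0 j) - ln (q h T j).
Proof.
elim: T => [|T IH]; first by rewrite big_ord0 subrr.
have [q_gt0 _] := exp4_q_dist T h.
have -> : q h T.+1 j = q h T j * expR (- (eta * exp4_lhat h T (E T j))) / exp4_Z h T by [].
rewrite big_ord_recr /= IH ln_div ?posrE ?exp4_Z_gt0 ?mulr_gt0 ?expR_gt0 //.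
by rewrite lnM ?posrE ?expR_gt0 // expRK; ring.
Qed.

Definition exp4_potential j t h :=
  ln (exp4_Z h t) + eta * exp4_lhat h t (E t j) +
  eta * (h t != y t)%:R - eta * (E t j != y t)%:R - 2 * eta ^+ 2.

Lemma exp4_potential_causal j t h h' : (forall k, (k <= t)%N -> h k = h' k) ->
  exp4_potential j t h = exp4_potential j t h'.
Proof.
move=> eq_hh'; have eq_q : q h t = q h' t.
  by apply: exp4_q_causal => k /ltnW; apply: eq_hh'.
by rewrite /exp4_potential /exp4_Z /exp4_lhat /exp4_lhat_of eq_q eq_hh'.
Qed.

Lemma exp4_potential_step j t h : 0 < eta <= 1 / 2 ->
  cond_step P t (exp4_potential j t) h <= 0.
Proof.
move=> eta01; have [q_gt0 q_sum1] := exp4_q_dist t h.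
have q_ge0 i := ltW (q_gt0 i).
have q_upd b : q (upd h t b) t = q h t by apply: exp4_q_causal => k; apply: upd_lt.
have a01 := mass_bounds q_ge0 q_sum1 (E t).
set a := \sum_i _ in a01; set p := p1 h t.
have p_def : p = (1 - eta) * a + eta by [].
have p_gt0 : 0 < p.
  have /andP[eta_gt0 eta_le] := eta01; have /andP[a_ge0 _] := a01.
  have : 0 <= (1 - eta) * a by rewrite mulr_ge0 // subr_ge0; lra.
  lra.
have lhat_upd b b' : exp4_lhat (upd h t b) t b' = ((b' != y t) && b)%:R / p.
  by rewrite /exp4_lhat /exp4_lhat_of q_upd upd_eq.
pose c : R := (E t j != y t)%:R; pose b : R := if y t then 1 - a else a.
have pot_false : exp4_potential j t (upd h t false) =
    eta * (y t)%:R - eta * c - 2 * eta ^+ 2.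
  rewrite /exp4_potential /exp4_Z lhat_upd upd_eq q_upd.
  under eq_bigr do rewrite lhat_upd andbF mul0r mulr0 oppr0 expR0 mulr1.
  by rewrite q_sum1 ln1 andbF mul0r mulr0 -/c; case: (y t) => /=; lra.
have pot_true : exp4_potential j t (upd h t true) =
    ln (1 - b + b * expR (- (eta / p))) + eta * (c / p) +
    eta * (~~ y t)%:R - eta * c - 2 * eta ^+ 2.
  rewrite /exp4_potential /exp4_Z lhat_upd upd_eq q_upd andbT.
  under eq_bigr do rewrite lhat_upd andbT mulrA mulrAC.
  by rewrite mix_expN // mass_neq //; case: (y t).
rewrite /cond_step -/p pot_true pot_false.
have := round_bound eta01 a01 p_def (erefl : b = if y t then 1 - a else a).
have -> : p * (ln (1 - b + b * expR (- (eta / p))) + eta * (c / p) + eta * (~~ y t)%:R -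
   eta * c - 2 * eta ^+ 2) + (1 - p) * (eta * (y t)%:R - eta * c - 2 * eta ^+ 2) =
   p * ln (1 - b + b * expR (- (eta / p))) + eta * (if y t then 1 - p else p) - 2 * eta ^+ 2.
  by case: (y t) => /=; field; apply: lt0r_neq0.
lra.
Qed.

Lemma exp4_expected_mistakesE T :
  exp4_expected_mistakes eta E T y =
  path_expect P T (fun h => \sum_(t < T) (h t != y t)%:R).
Proof.
by apply: eq_bigr => yh _; congr (_ * _); apply: eq_bigr => t _; rewrite ext_predE.
Qed.

Lemma exp4_regret j T : 0 < eta <= 1 / 2 ->
  eta * exp4_expected_mistakes eta E T y <=
  ln N%:R + eta * \sum_(t < T) (E t j != y t)%:R + 2 * eta ^+ 2 * T%:R.
Proof.
move=> eta01; have /andP[eta_gt0 eta_le] := eta01.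
have P01 t h : 0 <= P t h <= 1 by apply: exp4_p1_bounds => //; lra.
pose K := ln N%:R + eta * \sum_(t < T) (E t j != y t)%:R + 2 * eta ^+ 2 * T%:R.
have potential_ge (h : nat -> bool) : eta * (\sum_(t < T) (h t != y t)%:R) - K <=
    \sum_(t < T) exp4_potential j t h.
  rewrite /exp4_potential !sumrB big_split /= exp4_log_telescope.
  have [q_gt0 q_sum1] := exp4_q_dist T h.
  have : ln (q h T j) <= 0.
    rewrite ln_le0 // -q_sum1 (bigD1 j) //= lerDl.
    by apply: sumr_ge0 => i _; apply: ltW.
  rewrite /= lnV ?posrE ?ltr0n // sumr_const card_ord -[_ *+ T]mulr_natr -!mulr_sumr /K.
  lra.
have := path_expect_sum_le0 exp4_p1_causal P01 T
  (exp4_potential_causal j) (fun t h => exp4_potential_step j t h eta01).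
move/(le_trans (ler_path_expect P01 T potential_ge)).
rewrite (path_expect_affine exp4_p1_causal) exp4_expected_mistakesE.
rewrite /K; lra.
Qed.

Lemma exp4_single_expert j T : N = 1%N -> eta = 0 ->
  exp4_expected_mistakes eta E T y <= \sum_(t < T) (E t j != y t)%:R.
Proof.
move=> N1 eta0.
have P01 t h : 0 <= P t h <= 1 by apply: exp4_p1_bounds; rewrite // eta0 lexx ler01.
have only_j (i : 'I_N) : i = j.
  have ord0 (k : 'I_N) : (k : nat) = 0%N by apply/eqP; rewrite -leqn0 -ltnS -N1.
  by apply: val_inj; rewrite /= !ord0.
have P_j t h : P t h = (E t j)%:R.
  have [_ q_sum1] := exp4_q_dist t h.
  rewrite /exp4_p1 /exp4_p1_of eta0 in q_sum1 *; rewrite subr0 mul1r addr0.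
  under eq_bigr => i _ do rewrite [in E t i](only_j i).
  by rewrite -mulr_suml q_sum1 mul1r.
pose G t (h : nat -> bool) : R := (h t != y t)%:R - (E t j != y t)%:R.
have G_causal t h h' : (forall k, (k <= t)%N -> h k = h' k) -> G t h = G t h'.
  by move=> eq_hh'; rewrite /G eq_hh'.
have G_step t h : cond_step P t (G t) h <= 0.
  by rewrite /cond_step P_j /G !upd_eq; case: (E t j); case: (y t); rewrite /=; lra.
have := path_expect_sum_le0 exp4_p1_causal P01 T G_causal G_step.
have mistakes_le (h : nat -> bool) :
    1 * \sum_(t < T) (h t != y t)%:R - \sum_(t < T) (E t j != y t)%:R <= \sum_(t < T) G t h.
  by rewrite mul1r sumrB.
move/(le_trans (ler_path_expect P01 T mistakes_le)).
rewrite (path_expect_affine exp4_p1_causal) -exp4_expected_mistakesE.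
lra.
Qed.

End Exp4AT.

Lemma tuned_rate_bound (R : realType) (L T eta : R) :
  0 <= L -> 0 <= T -> 0 <= eta -> eta ^+ 2 * (2 * T) = L ->
  L + 2 * eta ^+ 2 * T <= eta * (3 * Num.sqrt (T * L)).
Proof.
move=> L_ge0 T_ge0 eta_ge0 eta2.
set s := Num.sqrt (T * L).
have s2 : s ^+ 2 = T * L by rewrite sqr_sqrtr // mulr_ge0.
have u_ge0 : 0 <= s * eta by rewrite mulr_ge0 ?sqrtr_ge0.
have u2 : (s * eta) ^+ 2 * 2 = L ^+ 2 by rewrite exprMn s2 -eta2; ring.
have : 2 * L <= 3 * (s * eta) by nra.
have -> : 2 * eta ^+ 2 * T = L by rewrite -eta2; ring.
lra.
Qed.

Theorem theorem3 (R : realType) (N T : nat) (E : nat -> 'I_N -> bool)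
    (y : nat -> bool) :
  (0 < N)%N ->
  Num.sqrt (ln (N%:R : R) / (2 * T%:R)) < 1 / 2 ->
  forall j : 'I_N,
    exp4_expected_mistakes (Num.sqrt (ln (N%:R : R) / (2 * T%:R))) E T y
    <= \sum_(t < T) (E t j != y t)%:R + 3 * Num.sqrt (T%:R * ln (N%:R : R)).
Proof.
move=> N_gt0 eta_lt j; set eta := Num.sqrt _ in eta_lt *.
have sqrt_ge0 : 0 <= 3 * Num.sqrt (T%:R * ln (N%:R : R)) by rewrite mulr_ge0 ?sqrtr_ge0.
have [->|T_gt0] := posnP T.
  by rewrite /exp4_expected_mistakes big1 => [|yh _]; rewrite ?big_ord0 ?mulr0 ?addr0.
have [N1|N_gt1] : N = 1%N \/ (1 < N)%N.
  by move: N_gt0; rewrite leq_eqVlt => /orP[/eqP|]; auto.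
  (* Here the tuned rate is 0, for which [exp4_regret] says nothing. *)
  apply: le_trans (exp4_single_expert E y N_gt0 j T N1 _) _; last by rewrite lerDl.
  by rewrite /eta N1 ln1 mul0r sqrtr0.
have L_gt0 : 0 < ln (N%:R : R) by rewrite ln_gt0 // ltr1n.
have rate2_gt0 : 0 < ln (N%:R : R) / (2 * T%:R) by rewrite divr_gt0 // mulr_gt0 // ltr0n.
have eta_gt0 : 0 < eta by rewrite sqrtr_gt0.
have eta2 : eta ^+ 2 * (2 * T%:R) = ln N%:R.
  by rewrite sqr_sqrtr ?ltW // divfK // mulf_neq0 // pnatr_eq0 -lt0n.
rewrite -(ler_pM2l eta_gt0) mulrDr.
apply: le_trans (exp4_regret E y N_gt0 j T _) _; first by rewrite eta_gt0 ltW.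
have := tuned_rate_bound (ltW L_gt0) (ler0n _ T) (ltW eta_gt0) eta2.
lra.
Qed.
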